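(* Let $m,n$ be positive integers and let $\tau=1^m\text{-}1^m\text{-}\cdots\text{-}1^m$ be the pattern consisting of $n$ runs of $m$ ones separated by $n-1$ dashes. Let $H(x,u,v)=\sum_{\phi}x^{\mathrm{len}(\phi)}u^{\mathrm{parts}(\phi)}v^{\mathrm{fst}(\phi)}$, the sum over all factorizations $\phi$ on the one-letter alphabet $\{1\}$ (including the empty factorization) that avoid $\tau$. Then \[ H(x,u,v)=1+\left[\frac{1-x}{(1-vx)(1-x-ux)}\right]\left[u(vx-(vx)^{mn})+\frac{u^2x^m\left((1-vx)(z-(vx)^m)z^{n-1}-(1-(vx)^m)(z^n-(vx)^{mn})\right)}{(z-(vx)^m)(1-x-u(x-x^m))}\right], \] where \[ z=x^m+\frac{ux^m(1-x^m)}{1-x-u(x-x^m)}. \]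
   Context: A factorization on $\{1\}$ is an ordered list $(\phi_1)\cdots(\phi_k)$ of nonempty words $\phi_j=1^{c_j}$; $\mathrm{parts}(\phi)=k$, $\mathrm{len}(\phi)=c_1+\cdots+c_k$, and $\mathrm{fst}(\phi)=c_1$ is the length of the first part ($\mathrm{fst}(\emptyset)=0$). A factorization $\phi$ contains $\tau$ if the word obtained from $\phi$ by inserting a single letter $0$ between each pair of adjacent parts contains $\tau$ by an occurrence not using the letter $0$; here a word contains $1^{m}\text{-}\cdots\text{-}1^{m}$ ($n$ runs) if it has $nm$ occurrences of the same letter at positions $i_1<\cdots<i_{nm}$ such that positions within each consecutive block of $m$ of them are consecutive in the word. Equivalently, $\phi$ contains $\tau$ iff one can choose $n$ disjoint runs of $m$ consecutive ones, each lying within a single part. Otherwise $\phi$ avoids $\tau$. *)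

From HB Require Import structures.
From mathcomp Require Import all_boot all_order all_algebra.
From mathcomp Require Import all_classical all_reals all_analysis.
Set Implicit Arguments. Unset Strict Implicit. Unset Printing Implicit Defensive.
Import Order.TTheory GRing.Theory Num.Theory.
Local Open Scope ring_scope.

(* A factorization on {1}: the list [c_1; ...; c_k] of the part lengths,
   i.e. phi = (1^{c_1}) ... (1^{c_k}) with every c_j >= 1. *)
Definition is_factorization (phi : seq nat) : bool := all (fun c => (0 < c)%N) phi.
Definition parts (phi : seq nat) : nat := size phi.
Definition len (phi : seq nat) : nat := sumn phi.
Definition fst (phi : seq nat) : nat := head 0%N phi.  (* fst(empty) = 0 *)

(* phi contains tau = 1^m-...-1^m (n runs) iff one can choose n disjoint runs
   of m consecutive ones, each lying within a single part.  A run is encoded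
   by (j, a): part index j, occupying positions a, ..., a+m-1 of part j. *)
Definition contains_tau (m n : nat) (phi : seq nat) : Prop :=
  exists s : seq (nat * nat),
    size s = n /\
    (forall p, p \in s -> (p.1 < size phi)%N /\ (p.2 + m <= nth 0%N phi p.1)%N) /\
    pairwise (fun p q : nat * nat =>
      [|| p.1 != q.1, (p.2 + m <= q.2)%N | (q.2 + m <= p.2)%N]) s.

Definition avoids_tau (m n : nat) (phi : seq nat) : bool := ~~ `[< contains_tau m n phi >].

Definition seq_of k L (f : {ffun 'I_k -> 'I_L}) : seq nat := [seq nat_of_ord (f i) | i <- enum 'I_k].

(* Every such factorization has k <= L parts, each
   of size <= L, and is enumerated exactly once by some f : 'I_k -> 'I_(L+1). *)
Definition coeffH (R : realType) (m n L : nat) (u v : R) : R :=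
  \sum_(k < L.+1) \sum_(f : {ffun 'I_k -> 'I_L.+1} |
       [&& is_factorization (seq_of f), len (seq_of f) == L & avoids_tau m n (seq_of f)])
    u ^+ parts (seq_of f) * v ^+ fst (seq_of f).

Definition zH (R : realType) (m : nat) (x u : R) : R :=
  x ^+ m + u * x ^+ m * (1 - x ^+ m) / (1 - x - u * (x - x ^+ m)).

Definition Hclosed (R : realType) (m n : nat) (x u v : R) : R :=
  let z := zH m x u in
  1 + ((1 - x) / ((1 - v * x) * (1 - x - u * x))) *
      (u * (v * x - (v * x) ^+ (m * n)) +
       (u ^+ 2 * x ^+ m *
          ((1 - v * x) * (z - (v * x) ^+ m) * z ^+ (n - 1)
           - (1 - (v * x) ^+ m) * (z ^+ n - (v * x) ^+ (m * n))))
       / ((z - (v * x) ^+ m) * (1 - x - u * (x - x ^+ m)))).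

(* A factorization contains 1^m-...-1^m (n runs) iff the sum of the
   floor(c_j / m) over its parts c_j is at least n: a part of length c holds
   at most floor(c / m) disjoint runs, and packing runs greedily attains this.
   Reading an avoiding factorization letter by letter is thus a walk in a
   finite automaton whose states (fl, b, r) record whether the current part is
   the first one (its letters weigh v), how many further runs b may still be
   completed, and the length r modulo m of the current part; each letter
   either extends the current part or starts a new one (weight u).  The
   coefficients of the states obey c_(L+1) = T c_L for the transfer operator
   T, of norm at most 1 + |u| when |v| <= 1.  Explicit rational functions
   built from z solve Y = 1 + x T Y, so the partial sums converge
   geometrically to Y once |x| (1 + |u|) < 1, and the start state gives the
   closed form. *)

From mathcomp Require Import all_boot all_order all_algebra.
From mathcomp Require Import all_classical all_reals all_analysis.
From mathcomp Require Import zify ring lra.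
Import Order.TTheory GRing.Theory Num.Theory.
Import numFieldNormedType.Exports.
Set Implicit Arguments. Unset Strict Implicit. Unset Printing Implicit Defensive.

Definition run_count (m : nat) (p : seq nat) : nat := \sum_(c <- p) c %/ m.

Lemma run_count_cons m c p : run_count m (c :: p) = c %/ m + run_count m p.
Proof. exact: big_cons. Qed.

Section Runs.

Variable m : nat.
Hypothesis m_gt0 : 0 < m.

Definition disjoint_runs (q q' : nat * nat) : bool :=
  [|| q.1 != q'.1, q.2 + m <= q'.2 | q'.2 + m <= q.2].

Definition run_cells (t : seq (nat * nat)) : seq nat :=
  flatten [seq iota q.2 m | q <- t].

Lemma size_run_cells t : size (run_cells t) = m * size t.
Proof.
elim: t => [|q t IH]; first by rewrite muln0.
by rewrite /run_cells /= size_cat size_iota -/(run_cells t) IH mulnS.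
Qed.

Lemma run_cells_uniq j t :
  all (fun q => q.1 == j) t -> pairwise disjoint_runs t -> uniq (run_cells t).
Proof.
elim: t => [|q t IH] //= /andP[/eqP qj t_j] /andP[q_t t_disj].
rewrite /run_cells /= cat_uniq iota_uniq -/(run_cells t) IH // andbT.
apply/hasP => -[y /flattenP[_ /mapP[q' q't ->] yq'] yq].
move/allP: q_t => /(_ q' q't); move/allP: t_j => /(_ q' q't) /eqP q'j.
rewrite /disjoint_runs qj q'j eqxx /=.
by move: yq yq'; rewrite !mem_iota => /andP[? ?] /andP[? ?] /orP[] ?; lia.
Qed.

Lemma size_runs_in_part j c t :
  all (fun q => q.1 == j) t -> pairwise disjoint_runs t ->
  (forall q, q \in t -> q.2 + m <= c) -> size t <= c %/ m.
Proof.
move=> t_j t_disj t_fit; rewrite leq_divRL // mulnC -size_run_cells.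
rewrite -[c](size_iota 0); apply: uniq_leq_size; first exact: run_cells_uniq t_j t_disj.
move=> y /flattenP[_ /mapP[q qt ->]]; rewrite !mem_iota add0n => /andP[_ yq].
exact: leq_trans yq (t_fit q qt).
Qed.

Lemma size_partition_by_part K (t : seq (nat * nat)) :
  (forall q, q \in t -> q.1 < K) ->
  size t = \sum_(j < K) size [seq q <- t | q.1 == j :> nat].
Proof.
elim: t => [|q t IH] t_K /=; first by rewrite big1.
rewrite IH => [|q' q't]; last by apply: t_K; rewrite inE q't orbT.
have qK : q.1 < K by apply: t_K; rewrite mem_head.
rewrite (bigD1 (Ordinal qK)) //= [in RHS](bigD1 (Ordinal qK)) //= eqxx addSn.
by congr (_ + _).+1; apply: eq_bigr => j /negPf; rewrite -val_eqE /= eq_sym => ->.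
Qed.

Definition greedy_runs (p : seq nat) (js : seq nat) : seq (nat * nat) :=
  flatten [seq [seq (j, i * m) | i <- iota 0 (nth 0 p j %/ m)] | j <- js].

Lemma size_greedy_runs p js : size (greedy_runs p js) = \sum_(j <- js) nth 0 p j %/ m.
Proof.
elim: js => [|j js IH]; first by rewrite big_nil.
by rewrite /greedy_runs /= size_cat size_map size_iota -/(greedy_runs p js) IH big_cons.
Qed.

Lemma greedy_runs_fit p js q :
  q \in greedy_runs p js -> q.1 \in js /\ q.2 + m <= nth 0 p q.1.
Proof.
move=> /flattenP[_ /mapP[j jjs ->] /mapP[i]]; rewrite mem_iota => /andP[_ hi] -> /=.
by split=> //; rewrite leq_divRL // mulSn addnC in hi.
Qed.

Lemma greedy_runs_disjoint p js : uniq js -> pairwise disjoint_runs (greedy_runs p js).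
Proof.
elim: js => [|j js IH] //= /andP[j_js js_uniq].
rewrite /greedy_runs /= pairwise_cat -/(greedy_runs p js) IH // andbT.
apply/andP; split.
  apply/allrelP => q q' /mapP[i _ ->] /greedy_runs_fit[q'_js _].
  by apply/orP; left; apply: contra j_js => /= /eqP ->.
rewrite pairwise_map.
have : pairwise ltn (iota 0 (nth 0 p j %/ m)).
  by rewrite -(sorted_pairwise ltn_trans) iota_ltn_sorted.
apply: sub_pairwise => i i' /= ii'.
by rewrite /disjoint_runs /= eqxx /= addnC -mulSn leq_mul2r ii' orbT.
Qed.

Lemma contains_tauP n p : contains_tau m n p <-> n <= run_count m p.
Proof.
have run_countE : run_count m p = \sum_(0 <= j < size p) nth 0 p j %/ m.
  by rewrite /run_count (big_nth 0).
split=> [[s [<- [s_fit s_disj]]] | n_le].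
  rewrite run_countE big_mkord (@size_partition_by_part (size p)) => [|q /s_fit[]//].
  apply: leq_sum => j _; apply: (@size_runs_in_part j).
  - exact: filter_all.
  - exact: pairwise_filter.
  - by move=> q; rewrite mem_filter => /andP[/eqP <- /s_fit[]].
exists (take n (greedy_runs p (iota 0 (size p)))).
split; first by rewrite size_takel // size_greedy_runs (leq_trans n_le) // run_countE
  /index_iota subn0.
split=> [q /mem_take /greedy_runs_fit[]|]; first by rewrite mem_iota.
exact: subseq_pairwise (take_subseq _ _) (greedy_runs_disjoint _ (iota_uniq _ _)).
Qed.

End Runs.

Lemma avoids_tauE m n p : 0 < m -> avoids_tau m n p = (run_count m p < n).
Proof.
move=> m_gt0; rewrite /avoids_tau ltnNge; congr negb.
by apply/asboolP/idP => /(contains_tauP m_gt0).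
Qed.

Definition incr_head (s : seq nat) : seq nat := if s is d :: r then d.+1 :: r else [::].

Lemma mem_map_incr_head s d r : (d.+1 :: r \in map incr_head s) = (d :: r \in s).
Proof. by apply/mapP/idP => [[[|d' r'] // ? [-> ->]] | ?]; last by exists (d :: r). Qed.

Lemma nil_map_incr_head s : ([::] \in map incr_head s) = ([::] \in s).
Proof. by apply/mapP/idP => [[[|d' r'] //]|]; last by exists [::]. Qed.

Lemma zero_notin_map_incr_head s r : (0 :: r \in map incr_head s) = false.
Proof. by apply/mapP => -[[|d' r'] _]. Qed.

(* Compositions of [L] whose first part may be empty; the first entry is what
   remains to be read of the current part. *)
Fixpoint open_compositions (L : nat) : seq (seq nat) :=
  if L is L'.+1 then
    [seq incr_head p | p <- open_compositions L'] ++
    [seq 0 :: incr_head p | p <- open_compositions L']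
  else [:: [:: 0]].

Definition compositions (L : nat) : seq (seq nat) :=
  if L is L'.+1 then [seq incr_head p | p <- open_compositions L'] else [:: [::]].

Lemma mem_open_compositions L p : p \in open_compositions L =
  if p is d :: r then is_factorization r && (d + sumn r == L) else false.
Proof.
elim: L p => [|L IH] [|d r] /=.
- by [].
- rewrite inE eqseq_cons; case: r => [|c r] /=; first by rewrite andbT addn0.
  by rewrite andbF; case: c => [|c] //=; rewrite addSn addnS andbF.
- by rewrite mem_cat nil_map_incr_head IH; apply/mapP => -[].
rewrite mem_cat; case: d => [|d].
  rewrite zero_notin_map_incr_head /=; apply/mapP/idP => [[[|d' r']] | ].
  - by rewrite IH.
  - rewrite IH => /andP[r'_pos /eqP <-] [->].
    by rewrite /= addSn eqxx andbT; exact: r'_pos.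
  case: r => [|[|c] r] //= /andP[r_pos]; rewrite addSn eqSS => L_eq.
  by exists (c :: r); rewrite // IH r_pos L_eq.
rewrite mem_map_incr_head IH addSn eqSS.
suff -> : (d.+1 :: r \in [seq 0 :: incr_head q | q <- open_compositions L]) = false.
  by rewrite orbF.
by apply/mapP => -[].
Qed.

Lemma incr_head_inj_open L : {in open_compositions L &, injective incr_head}.
Proof. by move=> [|d r] [|d' r']; rewrite !mem_open_compositions // => _ _ [-> ->]. Qed.

Lemma open_compositions_uniq L : uniq (open_compositions L).
Proof.
elim: L => [|L IH] //=; rewrite cat_uniq !map_inj_in_uniq ?IH //=.
- by rewrite andbT; apply/hasPn => _ /mapP[p _ ->]; rewrite /= zero_notin_map_incr_head.
- by move=> p q p_L q_L [] /(incr_head_inj_open p_L q_L).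
- exact: incr_head_inj_open.
Qed.

Lemma mem_compositions L p : (p \in compositions L) = is_factorization p && (len p == L).
Proof.
case: L => [|L] /=.
  rewrite inE; case: p => [|[|c] p] //=.
  by rewrite addSn andbF.
case: p => [|[|d] r]; rewrite /= ?nil_map_incr_head ?zero_notin_map_incr_head //.
  by rewrite mem_open_compositions.
by rewrite mem_map_incr_head mem_open_compositions addSn eqSS.
Qed.

Lemma compositions_uniq L : uniq (compositions L).
Proof.
case: L => [|L] //=; rewrite map_inj_in_uniq ?open_compositions_uniq //.
exact: incr_head_inj_open.
Qed.

Lemma size_seq_of k L (f : {ffun 'I_k -> 'I_L}) : size (seq_of f) = k.
Proof. by rewrite size_map size_enum_ord. Qed.

Lemma seq_of_eqE L (p : seq nat) (f : {ffun 'I_(size p) -> 'I_L.+1}) :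
  all (fun c => c <= L) p ->
  (seq_of f == p) = (f == [ffun i : 'I_(size p) => inord (nth 0 p i)]).
Proof.
move=> /allP p_le; apply/eqP/eqP => [f_p | ->].
  apply/ffunP => i; apply/val_inj; rewrite ffunE /= inordK ?ltnS ?p_le ?mem_nth //.
  by have := congr1 (nth 0 ^~ i) f_p; rewrite /= (nth_map i) ?size_enum_ord // nth_ord_enum.
apply: (@eq_from_nth _ 0); rewrite size_seq_of // => i i_p.
rewrite (nth_map (Ordinal i_p)) ?size_enum_ord // ffunE nth_enum_ord //.
by rewrite inordK // ltnS p_le ?mem_nth.
Qed.

Lemma size_factorization_le p : is_factorization p -> size p <= len p.
Proof. by elim: p => //= c p IH /andP[c_gt0 /IH]; rewrite /len /=; lia. Qed.

Lemma part_le_len p c : c \in p -> c <= len p.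
Proof. by elim: p => //= c' p IH /predU1P[->|/IH]; rewrite /len /=; lia. Qed.

Local Open Scope classical_set_scope.
Local Open Scope ring_scope.

Lemma sum_seq_of_eq (R : pzSemiRingType) L p : p \in compositions L ->
  \sum_(k < L.+1) \sum_(f : {ffun 'I_k -> 'I_L.+1}) (if seq_of f == p then 1 else 0) = 1 :> R.
Proof.
rewrite mem_compositions => /andP[p_pos /eqP p_L].
have size_p : (size p < L.+1)%N by rewrite ltnS -p_L size_factorization_le.
have p_le : all (fun c => c <= L)%N p by apply/allP => c; rewrite -p_L; apply: part_le_len.
rewrite (bigD1 (Ordinal size_p)) //= [X in _ + X]big1 ?addr0 => [|k k_p]; last first.
  apply: big1 => f _; case: eqP => // f_p.
  by move: k_p; rewrite -val_eqE /= -f_p size_seq_of eqxx.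
under eq_bigr do rewrite seq_of_eqE //.
by rewrite -big_mkcond big_pred1_eq.
Qed.

Lemma sum_indicator_seq (R : pzSemiRingType) (T : eqType) (r : seq T) (P : pred T)
    (g : T -> R) s : uniq r ->
  \sum_(p <- r | P p) (if s == p then 1 else 0) * g p = if (s \in r) && P s then g s else 0.
Proof.
move=> r_uniq; case: ifP => [/andP[s_r Ps] | sNrP].
  rewrite big_mkcond (bigD1_seq s) //= eqxx Ps mul1r big1 ?addr0 // => p /negPf.
  by rewrite eq_sym => ->; case: (P p); rewrite ?mul0r.
rewrite big1_seq // => p /andP[Pp p_r]; case: eqP => [s_p | _]; last by rewrite mul0r.
by move: sNrP; rewrite s_p p_r Pp.
Qed.

Lemma coeffH_compositions (R : realType) m n L (u v : R) :
  coeffH m n L u v = \sum_(p <- compositions L | avoids_tau m n p) u ^+ size p * v ^+ head 0%N p.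
Proof.
pose g (p : seq nat) : R := u ^+ size p * v ^+ head 0%N p.
transitivity (\sum_(k < L.+1) \sum_(f : {ffun 'I_k -> 'I_L.+1})
    \sum_(p <- compositions L | avoids_tau m n p) (if seq_of f == p then 1 else 0) * g p).
  apply: eq_bigr => k _; rewrite big_mkcond; apply: eq_bigr => f _.
  by rewrite sum_indicator_seq ?compositions_uniq // mem_compositions andbA.
under eq_bigr do rewrite exchange_big /=.
rewrite exchange_big /= big_seq_cond [RHS]big_seq_cond; apply: eq_bigr => p /andP[p_L _].
under eq_bigr do rewrite -mulr_suml.
by rewrite -mulr_suml sum_seq_of_eq // mul1r.
Qed.

Section States.

Variable m : nat.

Definition can_extend (b r : nat) : bool := (r.+1 < m)%N || (0 < b)%N.
Definition next_budget (b r : nat) : nat := if (r.+1 < m)%N then b else b.-1.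
Definition next_residue (r : nat) : nat := if (r.+1 < m)%N then r.+1 else 0%N.

Lemma next_budget_le b r : (next_budget b r <= b)%N.
Proof. by rewrite /next_budget; case: ifP => _; rewrite ?leq_pred. Qed.

Lemma next_residue_lt r : (r < m)%N -> (next_residue r < m)%N.
Proof. by rewrite /next_residue; case: ifP => // _; apply: leq_ltn_trans. Qed.

End States.

Section Automaton.

Variables (R : comNzRingType) (m : nat) (u v : R).

Definition letter_weight (fl : bool) : R := if fl then v else 1.

Definition extend (g : nat -> nat -> R) (b r : nat) : R :=
  if can_extend m b r then g (next_budget m b r) (next_residue m r) else 0.

Definition transfer (f : bool -> nat -> nat -> R) (fl : bool) (b r : nat) : R :=
  letter_weight fl * extend (f fl) b r + u * extend (f false) b 0.

Lemma extend_sum (I : Type) (s : seq I) (F : I -> nat -> nat -> R) b r :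
  extend (fun b' r' => \sum_(i <- s) F i b' r') b r = \sum_(i <- s) extend (F i) b r.
Proof. by rewrite /extend; case: can_extend => //; rewrite big1. Qed.

Lemma extendZ a g b r : extend (fun b' r' => a * g b' r') b r = a * extend g b r.
Proof. by rewrite /extend; case: can_extend; rewrite ?mulr0. Qed.

Lemma transfer_sum (I : Type) (s : seq I) (F : I -> bool -> nat -> nat -> R) fl b r :
  transfer (fun fl' b' r' => \sum_(i <- s) F i fl' b' r') fl b r =
  \sum_(i <- s) transfer (F i) fl b r.
Proof. by rewrite /transfer !extend_sum !mulr_sumr -big_split. Qed.

Lemma transferZ a f fl b r :
  transfer (fun fl' b' r' => a * f fl' b' r') fl b r = a * transfer f fl b r.
Proof. by rewrite /transfer !extendZ; ring. Qed.

Lemma transferB f g fl b r :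
  transfer (fun fl' b' r' => f fl' b' r' - g fl' b' r') fl b r =
  transfer f fl b r - transfer g fl b r.
Proof. by rewrite /transfer /extend; case: can_extend; case: can_extend; ring. Qed.

(* Weight of the open composition [d :: rest] read from the state (fl, b, r):
   [d] letters of the current part remain to be read. *)
Definition open_weight (fl : bool) (b r : nat) (p : seq nat) : R :=
  if p is d :: rest then
    if ((r + d) %/ m + run_count m rest <= b)%N then letter_weight fl ^+ d * u ^+ size rest
    else 0
  else 0.

Definition state_coeff (L : nat) (fl : bool) (b r : nat) : R :=
  \sum_(p <- open_compositions L) open_weight fl b r p.

Lemma open_weight_incr fl b r d rest : (r < m)%N ->
  open_weight fl b r (d.+1 :: rest) =
  letter_weight fl * extend (fun b' r' => open_weight fl b' r' (d :: rest)) b r.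
Proof.
move=> r_lt; have m_gt0 : (0 < m)%N by apply: leq_ltn_trans r_lt.
rewrite /open_weight /extend /can_extend /next_budget /next_residue addnS -addSn.
case: ltnP => [r1_lt | r1_ge] /=.
  by case: ifP => _; rewrite ?mulr0 // exprS mulrA.
have -> : r.+1 = m by apply/eqP; rewrite eqn_leq r_lt r1_ge.
rewrite add0n divnDl ?dvdnn // divnn m_gt0.
case: b => [|b] /=; first by rewrite mulr0.
rewrite -addnA add1n ltnS.
by case: ifP => _; rewrite ?mulr0 // exprS mulrA.
Qed.

Lemma open_weight_close fl b r d rest : (r < m)%N ->
  open_weight fl b r (0%N :: d.+1 :: rest) =
  u * extend (fun b' r' => open_weight false b' r' (d :: rest)) b 0.
Proof.
move=> r_lt; have m_gt0 : (0 < m)%N by apply: leq_ltn_trans r_lt.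
rewrite /open_weight /extend /can_extend /next_budget /next_residue run_count_cons.
rewrite addn0 divn_small // add0n /= expr0 mul1r expr1n mul1r exprS.
case: ltnP => [m_gt1 | m_le1] /=.
  by rewrite add1n; case: ifP => _; rewrite ?mulr0.
have -> : m = 1%N by apply/eqP; rewrite eqn_leq m_le1 m_gt0.
rewrite !divn1 add0n; case: b => [|b] /=; first by rewrite mulr0.
by rewrite addSn ltnS; case: ifP => _; rewrite ?mulr0.
Qed.

Lemma state_coeff0 fl b r : (r < m)%N -> state_coeff 0 fl b r = 1.
Proof.
move=> r_lt; rewrite /state_coeff big_seq1 /= addn0 divn_small //.
by rewrite /run_count big_nil !expr0 mulr1.
Qed.

Lemma state_coeffS L fl b r : (r < m)%N ->
  state_coeff L.+1 fl b r = transfer (state_coeff L) fl b r.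
Proof.
move=> r_lt; rewrite /state_coeff /transfer /= big_cat !big_map !extend_sum !mulr_sumr.
congr (_ + _); rewrite big_seq [RHS]big_seq; apply: eq_bigr => -[|d rest];
  rewrite mem_open_compositions // => _.
- exact: open_weight_incr.
- exact: open_weight_close.
Qed.

End Automaton.

Section Coefficients.

Variables (R : realType) (m n : nat) (u v : R).
Hypotheses (m_gt0 : (0 < m)%N) (n_gt0 : (0 < n)%N).

Lemma avoiding_weight_cons c rest :
  (if avoids_tau m n (c :: rest) then u ^+ size (c :: rest) * v ^+ head 0%N (c :: rest) else 0)
  = u * open_weight m u v true n.-1 0 (c :: rest).
Proof.
rewrite avoids_tauE // run_count_cons /open_weight add0n -[X in (_ < X)%N](prednK n_gt0) ltnS.
by case: ifP => _; rewrite /= ?mulr0 // exprS; ring.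
Qed.

Lemma coeffH0 : coeffH m n 0 u v = 1.
Proof.
rewrite coeffH_compositions big_mkcond big_seq1 avoids_tauE //.
by rewrite /run_count big_nil n_gt0 mulr1.
Qed.

Lemma coeffHS L : coeffH m n L.+1 u v = u * v * extend m (state_coeff m u v L true) n.-1 0.
Proof.
rewrite /state_coeff extend_sum mulr_sumr coeffH_compositions big_map big_mkcond.
rewrite big_seq [RHS]big_seq; apply: eq_bigr => -[|d rest]; rewrite mem_open_compositions // => _.
by rewrite avoiding_weight_cons open_weight_incr // mulrA.
Qed.

Definition partial_sum (x : R) (N : nat) (fl : bool) (b r : nat) : R :=
  \sum_(L < N) x ^+ L * state_coeff m u v L fl b r.

Lemma partial_sumS x N fl b r : (r < m)%N ->
  partial_sum x N.+1 fl b r = 1 + x * transfer m u v (partial_sum x N) fl b r.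
Proof.
move=> r_lt; rewrite /partial_sum big_ord_recl state_coeff0 // mulr1.
rewrite transfer_sum mulr_sumr; congr (_ + _); apply: eq_bigr => L _.
by rewrite lift0 state_coeffS // transferZ exprS mulrA.
Qed.

Lemma coeffH_partial_sumS x N :
  \sum_(L < N.+1) coeffH m n L u v * x ^+ L =
  1 + x * (u * v * extend m (partial_sum x N true) n.-1 0).
Proof.
rewrite big_ord_recl coeffH0 mulr1 /partial_sum extend_sum !mulr_sumr; congr (_ + _).
by apply: eq_bigr => L _; rewrite lift0 coeffHS extendZ exprS; ring.
Qed.

End Coefficients.

Lemma sum_expr_recl (R : pzRingType) (a : R) k :
  \sum_(d < k.+1) a ^+ d = 1 + a * \sum_(d < k) a ^+ d.
Proof.
by rewrite big_ord_recl expr0 mulr_sumr; congr (_ + _); apply: eq_bigr => i _; rewrite exprS.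
Qed.

Lemma sum_exprE (F : fieldType) (a : F) k : 1 - a != 0 ->
  \sum_(d < k) a ^+ d = (1 - a ^+ k) / (1 - a).
Proof. by move=> a_neq1; rewrite -[1 - a ^+ k]opprB subrX1 -mulNr opprB mulrC mulKf. Qed.

(* [state_gf fl b r] is the generating function of the words accepted from
   the state (fl, b, r), and [budget_gf b] the one at a part boundary with
   budget [b]. *)
Section ClosedForm.

Variables (R : realType) (m : nat) (x u v : R).

Definition free_gf : R := (1 - x) / (1 - x - u * x).

Definition budget_gf (b : nat) : R :=
  free_gf - free_gf * (zH m x u - x ^+ m) / (1 - x ^+ m) * zH m x u ^+ b.

Definition tail_gf (w : R) (b : nat) : R :=
  \sum_(j < b) ((w * x) ^+ m) ^+ j * budget_gf (b.-1 - j).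

Definition state_gf (fl : bool) (b r : nat) : R :=
  budget_gf b * \sum_(d < m - r) (letter_weight v fl * x) ^+ d +
  (letter_weight v fl * x) ^+ (m - r) * (\sum_(e < m) (letter_weight v fl * x) ^+ e) *
    tail_gf (letter_weight v fl) b.

Lemma tail_gf0 w : tail_gf w 0 = 0.
Proof. exact: big_ord0. Qed.

Lemma tail_gfS w b : tail_gf w b.+1 = budget_gf b + (w * x) ^+ m * tail_gf w b.
Proof.
rewrite /tail_gf big_ord_recl expr0 mul1r subn0 mulr_sumr; congr (_ + _).
by apply: eq_bigr => j _; rewrite exprS mulrA lift0; congr (_ * budget_gf _); lia.
Qed.

Hypothesis xm_neq1 : 1 - x ^+ m != 0.

Lemma tail_gf1E b : tail_gf 1 b = free_gf * (1 - zH m x u ^+ b) / (1 - x ^+ m).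
Proof.
elim: b => [|b IH]; first by rewrite tail_gf0 expr0 subrr mulr0 mul0r.
rewrite tail_gfS IH mul1r /budget_gf exprS.
move: (zH m x u) (zH m x u ^+ b) free_gf (x ^+ m) xm_neq1 => z Z a X X_neq1.
by field.
Qed.

Lemma tail_gfE w b : 1 - (w * x) ^+ m != 0 -> zH m x u - (w * x) ^+ m != 0 ->
  tail_gf w b = free_gf * (1 - ((w * x) ^+ m) ^+ b) / (1 - (w * x) ^+ m)
    - free_gf * (zH m x u - x ^+ m) / (1 - x ^+ m)
      * (zH m x u ^+ b - ((w * x) ^+ m) ^+ b) / (zH m x u - (w * x) ^+ m).
Proof.
move=> q_neq1 z_neq_q.
elim: b => [|b IH]; first by rewrite tail_gf0 !expr0 !subrr !mulr0 !mul0r subrr.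
rewrite tail_gfS IH /budget_gf !exprS.
move: (zH m x u) (zH m x u ^+ b) free_gf (x ^+ m) ((w * x) ^+ m) (((w * x) ^+ m) ^+ b)
  xm_neq1 q_neq1 z_neq_q => z Z a X q Q X_neq1 q_neq1 z_neq_q.
by field; rewrite X_neq1 q_neq1 z_neq_q.
Qed.

Lemma extend_state_gf fl b r : (r < m)%N ->
  extend m (state_gf fl) b r =
  budget_gf b * \sum_(d < m - r.+1) (letter_weight v fl * x) ^+ d +
  (letter_weight v fl * x) ^+ (m - r.+1) * (\sum_(e < m) (letter_weight v fl * x) ^+ e) *
    tail_gf (letter_weight v fl) b.
Proof.
move=> r_lt; rewrite /extend /can_extend /next_budget /next_residue.
case: ltnP => [r1_lt | r1_ge] //=.
have -> : (m - r.+1 = 0)%N by apply/eqP; rewrite subn_eq0.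
rewrite big_ord0 expr0; case: b => [|b] /=; first by rewrite tail_gf0; ring.
by rewrite /state_gf subn0 tail_gfS; ring.
Qed.

Lemma state_gf_extend fl b r : (r < m)%N ->
  state_gf fl b r = budget_gf b + letter_weight v fl * x * extend m (state_gf fl) b r.
Proof.
move=> r_lt; rewrite extend_state_gf // {1}/state_gf.
have -> : (m - r = (m - r.+1).+1)%N by rewrite subnSK.
by rewrite sum_expr_recl exprS; ring.
Qed.

Hypotheses (m_gt0 : (0 < m)%N) (x_neq1 : 1 - x != 0) (free_den : 1 - x - u * x != 0)
  (z_den : 1 - x - u * (x - x ^+ m) != 0).

Lemma budget_gf_close b : budget_gf b = 1 + x * u * extend m (state_gf false) b 0.
Proof.
rewrite extend_state_gf // subn1 /= !mul1r tail_gf1E !sum_exprE //.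
rewrite /budget_gf /zH /free_gf.
have xmE : x ^+ m = x * x ^+ m.-1 by rewrite -exprS prednK.
have := z_den; have := xm_neq1; rewrite xmE.
move: (x ^+ m.-1) (_ ^+ b) => Y Z X_neq1 z_den'.
by field; rewrite x_neq1 free_den z_den' X_neq1.
Qed.

Lemma state_gf_fixpoint fl b r : (r < m)%N ->
  state_gf fl b r = 1 + x * transfer m u v state_gf fl b r.
Proof. by move=> r_lt; rewrite /transfer state_gf_extend // budget_gf_close; ring. Qed.

End ClosedForm.

Lemma Hclosed_state_gf (R : realType) m n (x u v : R) : (0 < m)%N -> (0 < n)%N ->
  1 - x - u * x != 0 -> 1 - x - u * (x - x ^+ m) != 0 -> 1 - x ^+ m != 0 ->
  1 - v * x != 0 -> 1 - (v * x) ^+ m != 0 -> zH m x u - (v * x) ^+ m != 0 ->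
  Hclosed m n x u v = 1 + x * (u * v * extend m (state_gf m x u v true) n.-1 0).
Proof.
move=> m_gt0 n_gt0 free_den z_den xm_neq1 vx_neq1 vxm_neq1 z_neq_vxm.
rewrite extend_state_gf // subn1 /= tail_gfE // !sum_exprE //.
rewrite /Hclosed /budget_gf /free_gf.
case: n n_gt0 => [|n] // _; rewrite /= subn1 /= exprM !exprS expr0 mulr1.
have xmE : x ^+ m = x * x ^+ m.-1 by rewrite -exprS prednK.
have vxmE : (v * x) ^+ m = v * x * (v * x) ^+ m.-1 by rewrite -exprS prednK.
rewrite /zH xmE vxmE in z_den xm_neq1 vxm_neq1 z_neq_vxm *.
move: (x ^+ m.-1) ((v * x) ^+ m.-1) z_den xm_neq1 vxm_neq1 z_neq_vxm
  => y p E_neq0 xm_neq1 vxm_neq1 z_neq_vxm.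
set E := 1 - x - u * (x - x * y) in E_neq0 z_neq_vxm *.
set z := x * y + _ in z_neq_vxm *.
move: (z ^+ n) ((v * x * p) ^+ n) => Z Q.
have z_num : x * y * E + u * (x * y) * (1 - x * y) + - (v * x * p) * E != 0.
  suff -> : x * y * E + u * (x * y) * (1 - x * y) + - (v * x * p) * E =
    (z - v * x * p) * E by rewrite mulf_neq0.
  by rewrite /z; field.
by rewrite /z; field; rewrite E_neq0 z_num xm_neq1 free_den vxm_neq1 vx_neq1.
Qed.


(* At x = 0 the closed form divides by z - (vx)^m = 0; since x / 0 = 0 it
   still evaluates to 1. *)
Lemma Hclosed_x0 (R : realType) m n (u v : R) :
  (0 < m)%N -> (0 < n)%N -> Hclosed m n 0 u v = 1.
Proof.
move=> m_gt0 n_gt0; rewrite /Hclosed /zH !mulr0 !expr0n /= muln_eq0.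
rewrite -[m == 0%N]negbK -lt0n m_gt0 /= -[n == 0%N]negbK -lt0n n_gt0 /=.
by rewrite !(subrr, mulr0, mul0r, addr0).
Qed.

Section Convergence.

Variables (R : realType) (m n : nat) (x u v : R).
Hypotheses (v_le1 : `|v| <= 1) (rho_lt1 : `|x| * (1 + `|u|) < 1).

Lemma norm_extend_le (g : nat -> nat -> R) C b r :
  (forall b' r', (b' < n)%N -> (r' < m)%N -> `|g b' r'| <= C) -> 0 <= C ->
  (b < n)%N -> (r < m)%N -> `|extend m g b r| <= C.
Proof.
move=> g_le C_ge0 b_lt r_lt; rewrite /extend; case: ifP => _; last by rewrite normr0.
by apply: g_le; [exact: leq_ltn_trans (next_budget_le _ _ _) b_lt | exact: next_residue_lt].
Qed.

Lemma cvg_extend (g : nat -> nat -> nat -> R) (G : nat -> nat -> R) b r :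
  (forall b' r', (b' < n)%N -> (r' < m)%N -> g N b' r' @[N --> \oo] --> G b' r') ->
  (b < n)%N -> (r < m)%N -> extend m (g N) b r @[N --> \oo] --> extend m G b r.
Proof.
move=> g_cvg b_lt r_lt; rewrite /extend; case: ifP => _; last exact: cvg_cst.
by apply: g_cvg; [exact: leq_ltn_trans (next_budget_le _ _ _) b_lt | exact: next_residue_lt].
Qed.

Lemma norm_transfer_le f C fl b r :
  (forall fl' b' r', (b' < n)%N -> (r' < m)%N -> `|f fl' b' r'| <= C) -> 0 <= C ->
  (b < n)%N -> (r < m)%N -> `|transfer m u v f fl b r| <= (1 + `|u|) * C.
Proof.
move=> f_le C_ge0 b_lt r_lt; have m_gt0 : (0 < m)%N by apply: leq_ltn_trans r_lt.
apply: le_trans (ler_normD _ _) _; rewrite mulrDl mul1r !normrM.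
apply: lerD; last by apply: ler_wpM2l => //; exact: norm_extend_le (f_le false) C_ge0 b_lt m_gt0.
rewrite -[C]mul1r; apply: ler_pM => //; last exact: norm_extend_le (f_le fl) C_ge0 b_lt r_lt.
by case: fl; rewrite /= ?normr1.
Qed.

Variable Y : bool -> nat -> nat -> R.
Hypothesis Y_fixpoint : forall fl b r, (b < n)%N -> (r < m)%N ->
  Y fl b r = 1 + x * transfer m u v Y fl b r.

Let C := \sum_(s : bool * 'I_n * 'I_m) `|Y s.1.1 s.1.2 s.2|.

Let C_ge0 : 0 <= C. Proof. exact: sumr_ge0. Qed.

Let norm_Y_le fl b r : (b < n)%N -> (r < m)%N -> `|Y fl b r| <= C.
Proof.
by move=> b_lt r_lt; rewrite /C (bigD1 (fl, Ordinal b_lt, Ordinal r_lt)) //= lerDl sumr_ge0.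
Qed.

Lemma partial_sum_error N fl b r : (b < n)%N -> (r < m)%N ->
  `|partial_sum m u v x N fl b r - Y fl b r| <= C * (`|x| * (1 + `|u|)) ^+ N.
Proof.
elim: N fl b r => [|N IH] fl b r b_lt r_lt.
  by rewrite /partial_sum big_ord0 sub0r normrN expr0 mulr1 norm_Y_le.
rewrite partial_sumS // Y_fixpoint // opprD addrACA subrr add0r -mulrBr -transferB normrM.
have err_ge0 : 0 <= C * (`|x| * (1 + `|u|)) ^+ N by rewrite mulr_ge0 ?exprn_ge0 ?mulr_ge0.
apply: le_trans (ler_wpM2l (normr_ge0 x) (norm_transfer_le fl IH err_ge0 b_lt r_lt)) _.
by rewrite exprS le_eqVlt; apply/orP; left; apply/eqP; ring.
Qed.

Lemma partial_sum_cvg fl b r : (b < n)%N -> (r < m)%N ->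
  partial_sum m u v x N fl b r @[N --> \oo] --> Y fl b r.
Proof.
move=> b_lt r_lt; apply/subr_cvg0/norm_cvg0P.
apply: (@squeeze_cvgr _ _ _ _ (cst 0) (fun N => C * (`|x| * (1 + `|u|)) ^+ N)).
- by near=> N; rewrite normr_ge0 /= partial_sum_error.
- exact: cvg_cst.
- rewrite -(mulr0 C); apply: cvgMl_tmp; apply: cvg_expr.
  by rewrite ger0_norm // mulr_ge0 // addr_ge0.
Unshelve. all: by end_near.
Qed.

End Convergence.

Lemma subr1_neq0 (R : numDomainType) (a : R) : `|a| < 1 -> 1 - a != 0.
Proof. by move=> a_lt1; rewrite subr_eq0; apply: contraTneq a_lt1 => <-; rewrite normr1 ltxx. Qed.

Lemma norm_exprn_le (R : numDomainType) (a : R) k :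
  (0 < k)%N -> `|a| <= 1 -> `|a ^+ k| <= `|a|.
Proof. by move=> k_gt0 a_le1; rewrite normrX ler_iXnr. Qed.

Lemma small_rho (R : realType) (x u : R) :
  `|x| < 1/8 -> `|u| < 1/8 -> `|x| * (1 + `|u|) < 1.
Proof.
by move=> x_small u_small; have := normr_ge0 x; have := normr_ge0 u; nra.
Qed.

Lemma small_perturbation (R : realType) m (x u : R) : (0 < m)%N ->
  `|x| < 1/8 -> `|u| < 1/8 -> `|x + u * (x - x ^+ m)| <= 5/32.
Proof.
move=> m_gt0 x_small u_small.
have xm_le : `|x ^+ m| <= `|x| by apply: norm_exprn_le => //; lra.
have : `|u * (x - x ^+ m)| <= 1/8 * (1/4).
  rewrite normrM; apply: ler_pM => //; first lra.
  by apply: le_trans (ler_normB _ _) _; lra.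
by move: (ler_normD x (u * (x - x ^+ m))); lra.
Qed.

Lemma small_denominators (R : realType) m (x u : R) : (0 < m)%N ->
  `|x| < 1/8 -> `|u| < 1/8 ->
  [/\ 1 - x != 0, 1 - x - u * x != 0, 1 - x - u * (x - x ^+ m) != 0 & 1 - x ^+ m != 0].
Proof.
move=> m_gt0 x_small u_small.
split; rewrite -?addrA -?opprD; apply: subr1_neq0.
- lra.
- have : `|u * x| <= 1/8 * (1/8) by rewrite normrM; apply: ler_pM => //; lra.
  by move: (ler_normD x (u * x)); lra.
- by move: (small_perturbation m_gt0 x_small u_small); lra.
- by apply: le_lt_trans (norm_exprn_le m_gt0 _) _; lra.
Qed.

Lemma small_v_denominators (R : realType) m (x v : R) : (0 < m)%N ->
  `|x| < 1/8 -> `|v| < 1/8 -> 1 - v * x != 0 /\ 1 - (v * x) ^+ m != 0.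
Proof.
move=> m_gt0 x_small v_small.
have vx_lt : `|v * x| < 1.
  by rewrite normrM; have := ler_pM (normr_ge0 v) (normr_ge0 x) (ltW v_small) (ltW x_small); lra.
split; apply: subr1_neq0 => //.
by apply: le_lt_trans (norm_exprn_le m_gt0 (ltW vx_lt)) vx_lt.
Qed.

Lemma small_zH_neq0 (R : realType) m (x u v : R) : (0 < m)%N ->
  `|x| < 1/8 -> `|u| < 1/8 -> `|v| < 1/8 -> x != 0 -> zH m x u - (v * x) ^+ m != 0.
Proof.
move=> m_gt0 x_small u_small v_small x_neq0; set E := 1 - x - u * (x - x ^+ m).
have E_gt : 1/2 < `|E|.
  have := ler_normD E (x + u * (x - x ^+ m)).
  have -> : E + (x + u * (x - x ^+ m)) = 1 by rewrite /E; ring.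
  by move: (small_perturbation m_gt0 x_small u_small); rewrite normr1; lra.
have E_neq0 : E != 0 by rewrite -normr_eq0; apply/eqP => E0; move: E_gt; rewrite E0; lra.
have -> : zH m x u - (v * x) ^+ m = x ^+ m * (1 - (v ^+ m - u * (1 - x ^+ m) / E)).
  by rewrite /zH exprMn -/E; field.
rewrite mulf_neq0 ?expf_neq0 //; apply: subr1_neq0.
apply: le_lt_trans (ler_normB _ _) _.
have vm_le : `|v ^+ m| <= `|v| by apply: norm_exprn_le => //; lra.
have uxm_le : `|u * (1 - x ^+ m)| <= 1/8 * (9/8).
  rewrite normrM; apply: ler_pM => //; first lra.
  have : `|x ^+ m| <= `|x| by apply: norm_exprn_le => //; lra.
  by move: (ler_normB 1 (x ^+ m)); rewrite normr1; lra.
have E_pos : 0 < `|E| by lra.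
have : `|u * (1 - x ^+ m)| / `|E| <= 9/32 by rewrite ler_pdivrMr //; lra.
rewrite [`|_ / E|]normrM normfV; lra.
Qed.

Theorem lemma5p1 (R : realType) (m n : nat) :
  (0 < m)%N -> (0 < n)%N ->
  exists eps : R, 0 < eps /\
    forall x u v : R, `|x| < eps -> `|u| < eps -> `|v| < eps ->
      (fun N : nat => \sum_(L < N) coeffH m n L u v * x ^+ L) @ \oo
        --> Hclosed m n x u v.
Proof.
move=> m_gt0 n_gt0; exists (1/8); split=> [|x u v x_small u_small v_small]; first lra.
have [x_neq1 free_den z_den xm_neq1] := small_denominators m_gt0 x_small u_small.
have [vx_neq1 vxm_neq1] := small_v_denominators m_gt0 x_small v_small.
rewrite -cvg_shiftS /= (eq_cvg _ _ (coeffH_partial_sumS u v m_gt0 n_gt0 x)).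
have [->|x_neq0] := eqVneq x 0.
  by rewrite Hclosed_x0 //; under eq_cvg do rewrite mul0r addr0; exact: cvg_cst.
rewrite Hclosed_state_gf ?small_zH_neq0 //.
apply: cvgD; first exact: cvg_cst.
have n_pred_lt : (n.-1 < n)%N by rewrite ltn_predL.
do 2 apply: cvgMl_tmp; apply: (cvg_extend _ n_pred_lt m_gt0) => b r b_lt r_lt.
apply: partial_sum_cvg => //.
- by have := v_small; lra.
- exact: small_rho.
- by move=> fl b' r' _ r'_lt; apply: state_gf_fixpoint.
Qed.
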